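(* Let $K$ be a field of characteristic $0$, $e\ge 2$, $A,B\in M_e(K)$, $d\in(\mathbb{Z}/e\mathbb{Z})^\times$, and let $\mathcal{K}=[\delta_{i+1,j}]_{0\le i,j\le e-1}\in M_e(K)$ be the circulant matrix (indices modulo $e$). For $0\le l\le e-1$: (i) $\mathcal{K}^l(A\overset{d}{\ast}B)=A\overset{d}{\ast}(\mathcal{K}^lB)=(\mathcal{K}^{-d^{-1}l}A)\overset{d}{\ast}B$; (ii) $(A\overset{d}{\ast}B)\mathcal{K}^l=A\overset{d}{\ast}(B\mathcal{K}^l)=(A\mathcal{K}^{-d^{-1}l})\overset{d}{\ast}B$.
   Context: For $A=[a_{i,j}],B=[b_{i,j}]\in M_e(K)$ (indices modulo $e$) and $d\in(\mathbb{Z}/e\mathbb{Z})\setminus\{0\}$, the $d$-composition is $A\overset{d}{\ast}B=\big[\sum_{s=0}^{e-1}\sum_{t=0}^{e-1}a_{s,t}b_{ds+i,dt+j}\big]_{0\le i,j\le e-1}$. Here $\delta$ is Kronecker's delta, and $d^{-1}$ is the inverse of $d$ in $\mathbb{Z}/e\mathbb{Z}$. *)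

From HB Require Import structures.
From mathcomp Require Import all_boot all_order all_algebra.
Set Implicit Arguments. Unset Strict Implicit. Unset Printing Implicit Defensive.
Import GRing.Theory.
Local Open Scope ring_scope.

(* Matrices of size e = n.+2 (so e >= 2); indices 'I_(n.+2) are identified
   with Z/eZ = 'Z_(n.+2) (convertible types), so index arithmetic is mod e. *)

Definition dcomp (K : fieldType) (n : nat) (d : 'Z_(n.+2))
  (A B : 'M[K]_(n.+2)) : 'M[K]_(n.+2) :=
  \matrix_(i, j) \sum_(s < n.+2) \sum_(t < n.+2)
     A s t * B (d * (s : 'Z_(n.+2)) + (i : 'Z_(n.+2)))
               (d * (t : 'Z_(n.+2)) + (j : 'Z_(n.+2))).

Definition circK (K : fieldType) (n : nat) : 'M[K]_(n.+2) :=
  \matrix_(i, j) (((j : 'Z_(n.+2)) == (i : 'Z_(n.+2)) + 1)%:R).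

(* Left multiplication by the circulant K shifts the rows of a matrix up by
   one, right multiplication shifts its columns right by one, and K has order
   e.  In the d-composition the row index i of the result enters only through
   the row index d s + i of B, so shifting i by l is the same as shifting the
   rows of B by l; and since d (s + m) + i = d s + (i + l) when d m = l, it is
   also the same as reindexing the sum over s, i.e. shifting the rows of A by
   -m. *)

From HB Require Import structures.
From mathcomp Require Import all_boot all_order all_algebra.
Import GRing.Theory.
Local Open Scope ring_scope.

Section Circulant.
Variables (K : fieldType) (n : nat).
Local Notation Z := 'Z_(n.+2).
Local Notation M := 'M[K]_(n.+2).
Local Notation circK := (circK K n).

Lemma circK_mul_entry (X : M) (i j : 'I_(n.+2)) :
  (circK * X) i j = X ((i : Z) + 1) j.
Proof.
rewrite -mulmxE mxE (bigD1 ((i : Z) + 1)) //= big1 ?addr0.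
  by rewrite mxE eqxx mul1r.
by move=> k /negbTE k_neq; rewrite mxE k_neq mul0r.
Qed.

Lemma mul_circK_entry (X : M) (i j : 'I_(n.+2)) :
  (X * circK) i j = X i ((j : Z) - 1).
Proof.
rewrite -mulmxE mxE (bigD1 ((j : Z) - 1)) //= big1 ?addr0.
  by rewrite mxE subrK eqxx mulr1.
move=> k k_neq; rewrite mxE; case: eqP => [j_eq|]; last by rewrite mulr0.
by move: k_neq; rewrite j_eq addrK eqxx.
Qed.

Lemma circKX_mul_entry (k : nat) (X : M) (i j : 'I_(n.+2)) :
  (circK ^+ k * X) i j = X ((i : Z) + k%:R) j.
Proof.
elim: k i => [|k IHk] i; first by rewrite expr0 mul1r addr0.
by rewrite exprS -mulrA circK_mul_entry IHk -natr1 addrA [_ + 1 + _]addrAC.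
Qed.

Lemma mul_circKX_entry (k : nat) (X : M) (i j : 'I_(n.+2)) :
  (X * circK ^+ k) i j = X i ((j : Z) - k%:R).
Proof.
elim: k j => [|k IHk] j; first by rewrite expr0 mulr1 subr0.
by rewrite exprSr mulrA mul_circK_entry IHk -natr1 opprD addrA [_ - 1 - _]addrAC.
Qed.

Lemma circK_order : circK ^+ n.+2 = 1.
Proof.
apply/matrixP => i j; rewrite -[_ ^+ _]mulr1 circKX_mul_entry.
have -> : (n.+2)%:R = 0 :> Z
  by apply: val_inj; rewrite [LHS](@val_Zp_nat n.+2) // modnn.
by rewrite addr0.
Qed.

Lemma circKX_unit (k : nat) : circK ^+ k \is a GRing.unit.
Proof.
apply: unitrX; have circK_inv : circK * circK ^+ n.+1 = 1.
  by rewrite -exprS circK_order.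
by case: (mulmx1_unit circK_inv).
Qed.

Lemma circKV_mul_entry (k : nat) (X : M) (i j : 'I_(n.+2)) :
  (circK ^- k * X) i j = X ((i : Z) - k%:R) j.
Proof. by rewrite -{2}[X](mulVKr (circKX_unit k)) circKX_mul_entry subrK. Qed.

Lemma mul_circKV_entry (k : nat) (X : M) (i j : 'I_(n.+2)) :
  (X * circK ^- k) i j = X i ((j : Z) + k%:R).
Proof. by rewrite -{2}[X](mulrVK (circKX_unit k)) mul_circKX_entry addrK. Qed.

Variables (d : Z) (A B : M).

Lemma circKX_mul_dcomp (k : nat) :
  circK ^+ k * dcomp d A B = dcomp d A (circK ^+ k * B).
Proof.
apply/matrixP => i j; rewrite circKX_mul_entry !mxE.
by apply: eq_bigr => s _; apply: eq_bigr => t _; rewrite circKX_mul_entry addrA.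
Qed.

Lemma dcomp_mul_circKX (k : nat) :
  dcomp d A B * circK ^+ k = dcomp d A (B * circK ^+ k).
Proof.
apply/matrixP => i j; rewrite mul_circKX_entry !mxE.
by apply: eq_bigr => s _; apply: eq_bigr => t _; rewrite mul_circKX_entry addrA.
Qed.

Lemma dcomp_circKV_mul (k m : nat) : d * m%:R = k%:R ->
  dcomp d A (circK ^+ k * B) = dcomp d (circK ^- m * A) B.
Proof.
move=> dm_k; apply/matrixP => i j; rewrite !mxE.
rewrite (reindex_inj (addIr (- (m%:R : Z)))) /=.
apply: eq_bigr => s _; apply: eq_bigr => t _.
rewrite circKX_mul_entry circKV_mul_entry; congr (_ * B _ _).
by rewrite mulrDr mulrN dm_k [in LHS]addrAC subrK.
Qed.

Lemma dcomp_mul_circKV (k m : nat) : d * m%:R = k%:R ->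
  dcomp d A (B * circK ^+ k) = dcomp d (A * circK ^- m) B.
Proof.
move=> dm_k; apply/matrixP => i j; rewrite !mxE; apply: eq_bigr => s _.
rewrite (reindex_inj (addIr (m%:R : Z))) /=.
apply: eq_bigr => t _.
rewrite mul_circKX_entry mul_circKV_entry; congr (_ * B _ _).
by rewrite mulrDr dm_k [in LHS]addrAC addrK.
Qed.

End Circulant.

Theorem lemma3p3 (K : fieldType) (charK : [pchar K] =i pred0) (n : nat)
  (A B : 'M[K]_(n.+2)) (d : 'Z_(n.+2)) (hd : d \is a GRing.unit)
  (l : 'I_(n.+2)) :
  let Km := circK K n in
  let m : nat := (d^-1 * (l : 'Z_(n.+2)))%R in
  (Km ^+ l * dcomp d A B = dcomp d A (Km ^+ l * B)
   /\ dcomp d A (Km ^+ l * B) = dcomp d (Km ^- m * A) B)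
  /\
  (dcomp d A B * Km ^+ l = dcomp d A (B * Km ^+ l)
   /\ dcomp d A (B * Km ^+ l) = dcomp d (A * Km ^- m) B).
Proof.
move=> Km m.
have dm_l : d * (m%:R : 'Z_(n.+2)) = l%:R by rewrite !natr_Zp mulVKr.
split; split.
- exact: circKX_mul_dcomp.
- exact: dcomp_circKV_mul.
- exact: dcomp_mul_circKX.
- exact: dcomp_mul_circKV.
Qed.
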